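(* Let $S,T,V$ be ordered trees, let $w\in T$, and let $f\colon T^w\to S$ and $g\colon V\to T$ be rigid surjections. Let $i$ be the injection of $f$ and let $v\in S$. Then \[ f^v\circ g^{i(v)} = (f\circ g^w)^v. \]
   Context: A tree is a finite, non-empty partially ordered set $(T,\sqsubseteq_T)$ with a smallest element (the root) such that the set of predecessors of each element is linearly ordered; each node counts as its own predecessor and successor. $v\wedge_T w$ is the $\sqsubseteq_T$-largest common predecessor. A tree is ordered if the immediate successors of each node carry a fixed linear order; this induces the lexicographic linear order $\leq_T$: $v\leq_T w$ if $v\sqsubseteq_T w$, and for incomparable $v,w$, $v\leq_T w$ iff the immediate successor of $v\wedge_T w$ below $v$ precedes the one below $w$. A morphism $e\colon S\to T$ satisfies $e(v\wedge_S w)=e(v)\wedge_T e(w)$, is monotone from $\leq_S$ to $\leq_T$, and maps root to root. A function $f\colon T\to S$ is a rigid surjection if there is a morphism $e\colon S\to T$ with $f\circ e={\rm id}_S$ and $e(f(w))\sqsubseteq_T w$ for all $w$; this $e$ is unique and called the injection of $f$. For $v\in T$, $T^v=\{u\in T\mid u\leq_T v\}$, an ordered tree with inherited orders. For a rigid surjection $f\colon T\to S$ with injection $i$ and $v\in S$, $f^v=f\upharpoonright T^{i(v)}$; its image is $S^v$. *)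

From mathcomp Require Import all_boot finmap.
Set Implicit Arguments. Unset Strict Implicit. Unset Printing Implicit Defensive.
Local Open Scope fset_scope.

(* An ordered tree is represented (up to isomorphism) as a finite set of
   addresses [seq nat], containing the root [::] and closed under taking
   prefixes. The tree order is the prefix order; the immediate successors
   of a node s are the nodes rcons s x, linearly ordered by x. *)
Definition node := seq nat.
Definition otree := {fset node}.

Definition is_tree (T : otree) : Prop :=
  [::] \in T /\ forall (s : node) (x : nat), rcons s x \in T -> s \in T.

Definition tle (v w : node) : bool := prefix v w.

Fixpoint tmeet (v w : node) : node :=
  match v, w with
  | x :: v', y :: w' => if x == y then x :: tmeet v' w' else [::]
  | _, _ => [::]
  end.

(* lexicographic linear order <=_T induced by the sibling orders *)
Fixpoint lexle (v w : node) : bool :=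
  match v, w with
  | [::], _ => true
  | _ :: _, [::] => false
  | x :: v', y :: w' => if x == y then lexle v' w' else (x < y)%N
  end.

Definition is_morphism (S T : otree) (e : node -> node) : Prop :=
  [/\ {in S, forall v, e v \in T},
      {in S &, forall v w, e (tmeet v w) = tmeet (e v) (e w)},
      {in S &, forall v w, lexle v w -> lexle (e v) (e w)} &
      e [::] = [::]].

Definition is_injection (T S : otree) (f : node -> node) (e : node -> node) : Prop :=
  [/\ {in T, forall w, f w \in S},
      is_morphism S T e,
      {in S, forall v, f (e v) = v} &
      {in T, forall w, tle (e (f w)) w}].

Definition rigid_surj (T S : otree) (f : node -> node) : Prop :=
  exists e, is_injection T S f e.

Definition subtree (T : otree) (v : node) : otree := [fset u in T | lexle u v].

Definition map_eq (D1 : otree) (f1 : node -> node) (D2 : otree) (f2 : node -> node)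
  : Prop := D1 = D2 /\ {in D1, f1 =1 f2}.

From mathcomp Require Import all_boot finmap zify.
Set Implicit Arguments. Unset Strict Implicit. Unset Printing Implicit Defensive.
Local Open Scope fset_scope.

(* The composite f o g^w is a rigid surjection with injection j o i, because
   restricting g to V^(j w) yields a rigid surjection onto T^w and rigid
   surjections compose.  Injections are unique, so the injection k of f o g^w
   satisfies k v = j (i v); as j (i v) <=_V j w, the subtree (V^(j w))^(k v)
   is just V^(j (i v)), and both maps are restrictions of f o g. *)

Lemma lexle_refl a : lexle a a.
Proof. by elim: a => //= x a IH; rewrite eqxx. Qed.

Lemma lexle_trans (b a c : node) : lexle a b -> lexle b c -> lexle a c.
Proof.
elim: b a c => [|y b IH] [|x a] [|z c] //=.
do 3 case: eqP => ?; subst => //; try (move=> h1 h2; lia).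
exact: IH.
Qed.

Lemma lexle_total a b : lexle a b || lexle b a.
Proof.
elim: a b => [|x a IH] [|y b] //=.
rewrite eq_sym; case: eqP => [_|ne_xy]; first exact: IH.
apply/orP; lia.
Qed.

Lemma lexle_anti a b : lexle a b -> lexle b a -> a = b.
Proof.
elim: a b => [|x a IH] [|y b] //=.
rewrite eq_sym; case: eqP => [->|ne_xy]; last lia.
by move=> h1 h2; rewrite (IH b).
Qed.

Lemma prefix_lexle (a b : node) : prefix a b -> lexle a b.
Proof.
elim: a b => [|x a IH] [|y b] //=.
by move=> /andP[/eqP -> /IH]; rewrite eqxx.
Qed.

Lemma prefix_anti (a b : node) : prefix a b -> prefix b a -> a = b.
Proof. by move=> /prefix_lexle h1 /prefix_lexle h2; apply: lexle_anti. Qed.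

Lemma tmeet_idPl (a b : node) : prefix a b -> tmeet a b = a.
Proof.
elim: a b => [|x a IH] [|y b] //=.
by move=> /andP[/eqP -> /IH ->]; rewrite eqxx.
Qed.

Lemma prefix_tmeetr a b : prefix (tmeet a b) b.
Proof.
elim: a b => [|x a IH] [|y b] //=.
by case: eqP => [->|_] //=; rewrite eqxx IH.
Qed.

Lemma in_subtree (T : otree) w u : (u \in subtree T w) = (u \in T) && lexle u w.
Proof. by rewrite !inE. Qed.

Lemma subtree_sub (T : otree) w u : u \in subtree T w -> u \in T.
Proof. by rewrite in_subtree => /andP[]. Qed.

Lemma subtree_subtree (T : otree) a b :
  lexle b a -> subtree (subtree T a) b = subtree T b.
Proof.
move=> ba; apply/fsetP => u; rewrite !in_subtree.
apply/idP/idP => [/andP[/andP[-> _] ->] // | /andP[-> ub]].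
by rewrite ub (lexle_trans ub ba).
Qed.

Lemma morph_prefix (S T : otree) (e : node -> node) :
  is_morphism S T e -> {in S &, forall a b, prefix a b -> prefix (e a) (e b)}.
Proof.
case=> _ e_meet _ _ a b aS bS ab.
by rewrite -(tmeet_idPl ab) e_meet //; apply: prefix_tmeetr.
Qed.

Lemma morphism_comp (S T U : otree) (e1 e2 : node -> node) :
  is_morphism S T e1 -> is_morphism T U e2 -> is_morphism S U (e2 \o e1).
Proof.
case=> e1T e1_meet e1_mono e1_root [e2U e2_meet e2_mono e2_root]; split=> /=.
- by move=> a aS; apply/e2U/e1T.
- by move=> a b aS bS; rewrite e1_meet // e2_meet // e1T.
- by move=> a b aS bS ab; apply: e2_mono; rewrite ?e1T // e1_mono.
- by rewrite e1_root e2_root.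
Qed.

Section RigidSurjections.

Variables (T S : otree) (f e : node -> node).
Hypothesis fe : is_injection T S f e.

Lemma injection_unique (e' : node -> node) :
  is_injection T S f e' -> {in S, e' =1 e}.
Proof.
case: fe => _ [eT _ _ _] fK efl [_ [e'T _ _ _] fK' e'fl] s sS.
apply: prefix_anti.
  by have := e'fl _ (eT _ sS); rewrite fK.
by have := efl _ (e'T _ sS); rewrite fK'.
Qed.

Lemma injection_subtree_image w :
  w \in S -> {in subtree T (e w), forall u, f u \in subtree S w}.
Proof.
case: fe => fS [_ _ e_mono _] fK efl wS u.
rewrite !in_subtree => /andP[uT uew]; rewrite fS //=.
case/orP: (lexle_total (f u) w) => // wfu.
have efu : e (f u) = e w.
  apply: lexle_anti; last exact: e_mono wS (fS _ uT) wfu.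
  exact: lexle_trans (prefix_lexle (efl _ uT)) uew.
by rewrite -(fK _ wS) -efu fK ?fS // lexle_refl.
Qed.

Lemma injection_subtree w :
  w \in S -> is_injection (subtree T (e w)) (subtree S w) f e.
Proof.
move=> wS; have [_ [eT e_meet e_mono e_root] fK efl] := fe; split.
- exact: injection_subtree_image.
- split=> //.
  + by move=> a; rewrite !in_subtree => /andP[aS aw]; rewrite eT // e_mono.
  + by move=> a b /subtree_sub aS /subtree_sub bS; apply: e_meet.
  + by move=> a b /subtree_sub aS /subtree_sub bS; apply: e_mono.
- by move=> s /subtree_sub sS; apply: fK.
- by move=> u /subtree_sub uT; apply: efl.
Qed.

End RigidSurjections.

Lemma injection_comp (V T S : otree) (f g i j : node -> node) :
  is_injection T S f i -> is_injection V T g j -> is_injection V S (f \o g) (j \o i).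
Proof.
move=> [fS imorph fK ifl] [gT jmorph gK jgl]; have [iT _ _ _] := imorph.
split=> /=.
- by move=> u uV; apply/fS/gT.
- exact: morphism_comp imorph jmorph.
- by move=> s sS; rewrite gK ?iT // fK.
- move=> u uV; have guT := gT _ uV; apply: prefix_trans (jgl _ uV).
  exact: (morph_prefix jmorph (iT _ (fS _ guT)) guT (ifl _ guT)).
Qed.

Theorem lemma4p4 (S T V : otree) (w : node) (f g i j : node -> node) (v : node) :
  is_tree S -> is_tree T -> is_tree V -> w \in T ->
  is_injection (subtree T w) S f i ->
  is_injection V T g j ->
  v \in S ->
  rigid_surj (subtree V (j w)) S (f \o g) /\
  forall k, is_injection (subtree V (j w)) S (f \o g) k ->
    map_eq (subtree V (j (i v))) (f \o g)
           (subtree (subtree V (j w)) (k v)) (f \o g).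
Proof.
move=> _ _ _ wT fi gj vS.
have fgw := injection_comp fi (injection_subtree gj wT).
split; first by exists (j \o i).
move=> k fgk; split=> //.
have [_ [jiS _ _ _] _ _] := fgw.
have := jiS _ vS; rewrite in_subtree => /andP[_ jiv_jw].
by rewrite (injection_unique fgw fgk vS) subtree_subtree.
Qed.
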